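(* Let $V\neq\emptyset$, let $F\colon V\leadsto V$ be a connected simple graph multifunction and let $v\in V$. Then $\mathrm{Wall}_{\mathrm{Leaf}_{v}(F,V)}(F,V)$ is Cauchy in $(V,d_F)$, and if $|V\setminus\mathrm{Leaf}_{v}(F,V)|<\aleph_0=|V|$ then $\mathrm{Wall}_{\aleph_0}(F,V)$ is Cauchy in $(V,d_F)$.
   Context: $\mathbb{N}=\{0,1,2,\dots\}$. A multifunction $F\colon V\leadsto V$ is a map $V\to P(V)$; it is a simple graph multifunction if $w\notin F(w)$ for all $w$ and $u\in F(w)\iff w\in F(u)$. Iterates: $F^{0\cup}(w)=\{w\}$, $F^{n\cup}(w)=\bigcup_{a\in F^{(n-1)\cup}(w)}F(a)$ for $n\ge1$. $F$ is connected if for all $u,w\in V$ there is $n\ge0$ with $u\in F^{n\cup}(w)$ (equivalently, a walk $u=\alpha_1,\dots,\alpha_{n+1}=w$ with $\alpha_i\in F(\alpha_{i+1})$). For connected $F$, $d_F(u,w)=\min\{n\in\mathbb{N}\mid u\in F^{n\cup}(w)\}$ is a metric on $V$. For $B\subset V$, $F_{+}(B)=\{x\mid F(x)\subset B\}$; $\mathrm{Leaf}_{v}(F,V)=\{w\in V\mid F(w)=\{v\}\}$; $\mathrm{Wall}_{A}(F,V)=\{U\subset V\mid A\subset F_{+}(U)\}$; $\mathrm{Wall}_{\aleph_0}(F,V)=\{U\subset V\mid |V\setminus F_{+}(U)|<\aleph_0\}$. A family $\Phi\subset P(V)$ is Cauchy in $(V,d_F)$ if for every $\varepsilon>0$ there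 is $M\in\Phi$ with $\mathrm{diam}(M)=\sup_{u,w\in M}d_F(u,w)<\varepsilon$. *)

From HB Require Import structures.
From mathcomp Require Import all_boot all_order all_algebra.
From mathcomp Require Import all_classical all_reals ereal.
Local Open Scope ereal_scope.

Set Implicit Arguments. Unset Strict Implicit. Unset Printing Implicit Defensive.
Import Order.TTheory GRing.Theory Num.Theory.
Local Open Scope classical_set_scope.
Local Open Scope ring_scope.

(* A multifunction F : V ~> V is a map V -> set V. *)

Definition simple_graph_mf (V : Type) (F : V -> set V) : Prop :=
  (forall w, ~ F w w) /\ (forall u w, F w u <-> F u w).

Fixpoint iterU (V : Type) (F : V -> set V) (n : nat) (w : V) : set V :=
  match n with
  | 0 => [set w]
  | n'.+1 => \bigcup_(a in iterU F n' w) F a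
  end.

Definition connected_mf (V : Type) (F : V -> set V) : Prop :=
  forall u w : V, exists n : nat, iterU F n w u.

(* d_F(u,w) = min { n | u \in F^{n cup}(w) }, written as an infimum in \bar R
   (for a nonempty set of naturals this is the minimum). *)
Definition dF (R : realType) (V : Type) (F : V -> set V) (u w : V) : \bar R :=
  ereal_inf [set (n%:R)%:E | n in [set n : nat | iterU F n w u]].

Definition diamF (R : realType) (V : Type) (F : V -> set V) (M : set V) : \bar R :=
  ereal_sup [set dF R F u w | u in M & w in M].

Definition Fplus (V : Type) (F : V -> set V) (B : set V) : set V :=
  [set x | F x `<=` B].

Definition Leaf (V : Type) (F : V -> set V) (v : V) : set V :=
  [set w | F w = [set v]].

Definition WallA (V : Type) (F : V -> set V) (A : set V) : set (set V) :=
  [set U | A `<=` Fplus F U].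

Definition Wall_aleph0 (V : Type) (F : V -> set V) : set (set V) :=
  [set U | finite_set (~` Fplus F U)].

Definition cauchy_family (R : realType) (V : Type) (F : V -> set V)
    (Phi : set (set V)) : Prop :=
  forall eps : R, 0 < eps -> exists2 M, Phi M & (diamF R F M < eps%:E)%E.

(* The singleton {v} lies in both walls: every leaf at v is mapped into {v},
   so Leaf_v(F,V) is contained in F_+({v}), whose complement is therefore
   finite as soon as that of Leaf_v(F,V) is.  A singleton has diameter 0,
   so it witnesses the Cauchy property for every eps > 0. *)
From HB Require Import structures.
From mathcomp Require Import all_boot all_order all_algebra.
From mathcomp Require Import all_classical all_reals ereal.

Local Open Scope classical_set_scope.
Local Open Scope ring_scope.
Import Order.TTheory GRing.Theory Num.Theory.

Section Singleton.
Variables (R : realType) (V : Type) (F : V -> set V).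

Lemma dF_ge0 (u w : V) : (0 <= dF R F u w)%E.
Proof. by apply: le_ereal_inf_tmp => _ [n _ <-]; rewrite lee_fin. Qed.

Lemma dF_xx (x : V) : dF R F x x = 0%E.
Proof.
apply/le_anti; rewrite dF_ge0 andbT.
by apply: ereal_inf_lbound; exists 0%N.
Qed.

Lemma diamF_set1 (x : V) : diamF R F [set x] = 0%E.
Proof.
apply/le_anti; apply/andP; split.
  by apply: ge_ereal_sup => _ [u /= -> [w /= -> <-]]; rewrite dF_xx.
by apply: ereal_sup_ubound; exists x => //; exists x => //; rewrite dF_xx.
Qed.

Lemma cauchy_family_set1 (Phi : set (set V)) (x : V) :
  Phi [set x] -> cauchy_family R F Phi.
Proof. by move=> Phix eps eps_gt0; exists [set x]; rewrite // diamF_set1 lte_fin. Qed.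

End Singleton.

Lemma Leaf_sub_Fplus_set1 (V : Type) (F : V -> set V) (v : V) :
  Leaf F v `<=` Fplus F [set v].
Proof. by move=> w Fw; rewrite /Fplus /= Fw. Qed.

Lemma WallA_Leaf_set1 (V : Type) (F : V -> set V) (v : V) :
  WallA F (Leaf F v) [set v].
Proof. exact: Leaf_sub_Fplus_set1. Qed.

Lemma Wall_aleph0_set1 (V : Type) (F : V -> set V) (v : V) :
  finite_set (~` Leaf F v) -> Wall_aleph0 F [set v].
Proof.
move=> finL; apply: sub_finite_set finL; apply: subsetC.
exact: Leaf_sub_Fplus_set1.
Qed.

Theorem lemma6p14 (R : realType) (V : Type) (F : V -> set V) (v : V) :
  [set: V] !=set0 ->
  simple_graph_mf F -> connected_mf F ->
  cauchy_family R F (WallA F (Leaf F v)) /\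
  ((finite_set (~` Leaf F v) /\ ([set: V] #= [set: nat])%card) ->
     cauchy_family R F (Wall_aleph0 F)).
Proof.
move=> _ _ _; split.
  by apply: cauchy_family_set1; apply: WallA_Leaf_set1.
move=> [finL _].
by apply: cauchy_family_set1; apply: Wall_aleph0_set1 finL.
Qed.
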